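(* Let $\gamma_X=(X,d_X)$ and $\gamma_Y=(Y,d_Y)$ be two dynamic metric spaces and let $\delta>0$. Then for every $X'\subseteq X$ there exists $Y'\subseteq Y$ with $|Y'|\le|X'|$ and $d_{\mathrm{dyn}}(\gamma_{X'},\gamma_{Y'})\le d_{\mathrm{dyn}}(\gamma_X,\gamma_Y)+\delta$.
   Context: A dynamic metric space $\gamma_X=(X,d_X(\cdot))$ is a finite set $X$ with $d_X:\mathbb{R}\times X\times X\to\mathbb{R}_{\ge0}$ such that each $d_X(t)$ is a pseudometric and each $t\mapsto d_X(t)(x,x')$ is continuous; for $X'\subseteq X$, $\gamma_{X'}=(X',d_X|_{X'})$. A tripod between sets $X,Y$ is a set $Z$ with surjections $\varphi_X:Z\to X$, $\varphi_Y:Z\to Y$. It is a $(2,\varepsilon)$-tripod if for all $t\in\mathbb{R}$ and $z,z'\in Z$: $\min_{t'\in[t-\varepsilon,t+\varepsilon]}d_X(t')(\varphi_Xz,\varphi_Xz')\le d_Y(t)(\varphi_Yz,\varphi_Yz')+2\varepsilon$ and $\min_{t'\in[t-\varepsilon,t+\varepsilon]}d_Y(t')(\varphi_Yz,\varphi_Yz')\le d_X(t)(\varphi_Xz,\varphi_Xz')+2\varepsilon$. The distortion of a tripod is the infimum of $\varepsilon>0$ for which it is a $(2,\varepsilon)$-tripod, and $d_{\mathrm{dyn}}(\gamma_X,\gamma_Y)$ is the infimum of distortions over all tripods between $X$ and $Y$. *)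

From mathcomp Require Import all_boot.
From Stdlib Require Import Reals.
From Coquelicot Require Import Coquelicot.

Set Implicit Arguments.
Unset Strict Implicit.
Unset Printing Implicit Defensive.
Local Open Scope R_scope.

Definition is_pseudometric (T : Type) (d : T -> T -> R) : Prop :=
  (forall x y, (0 <= d x y)) /\
  (forall x, d x x = 0) /\
  (forall x y, d x y = d y x) /\
  (forall x y z, (d x z <= d x y + d y z)).

Definition is_DMS (X : finType) (d : R -> X -> X -> R) : Prop :=
  (forall t, is_pseudometric (d t)) /\
  (forall x x', continuity (fun t => d t x x')).

Definition restr_dist (X : finType) (d : R -> X -> X -> R) (X' : {set X})
  : R -> {x : X | x \in X'} -> {x : X | x \in X'} -> R :=
  fun t a b => d t (proj1_sig a) (proj1_sig b).

Definition surjective (A B : Type) (f : A -> B) : Prop := forall b, exists a, f a = b.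

(* (phiX, phiY) with phiX : Z -> X, phiY : Z -> Y is a (2,eps)-tripod.
   "min_{t' in [t-eps,t+eps]} d(t')(..) <= c" is written as the existence of
   such a t' (the min is attained by continuity). *)
Definition is_2eps_tripod (X Y Z : Type) (dX : R -> X -> X -> R) (dY : R -> Y -> Y -> R)
  (phiX : Z -> X) (phiY : Z -> Y) (eps : R) : Prop :=
  forall (t : R) (z z' : Z),
    (exists t', (t - eps <= t' <= t + eps) /\
       (dX t' (phiX z) (phiX z') <= dY t (phiY z) (phiY z') + 2 * eps)) /\
    (exists t', (t - eps <= t' <= t + eps) /\
       (dY t' (phiY z) (phiY z') <= dX t (phiX z) (phiX z') + 2 * eps)).

(* distortion: infimum of eps > 0 such that it is a (2,eps)-tripod (+oo if none) *)
Definition distortion (X Y Z : Type) (dX : R -> X -> X -> R) (dY : R -> Y -> Y -> R)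
  (phiX : Z -> X) (phiY : Z -> Y) : Rbar :=
  Rbar_glb (fun e : Rbar => exists eps : R,
              e = Finite eps /\ (0 < eps) /\ is_2eps_tripod dX dY phiX phiY eps).

Definition d_dyn (X Y : Type) (dX : R -> X -> X -> R) (dY : R -> Y -> Y -> R) : Rbar :=
  Rbar_glb (fun e : Rbar => exists (Z : Type) (phiX : Z -> X) (phiY : Z -> Y),
              surjective phiX /\ surjective phiY /\ e = distortion dX dY phiX phiY).

Arguments restr_dist [X] d X' _ _ _.

(* Pull back a near-optimal tripod Z between X and Y along a section g of its
   surjection onto X: restricted to X', the tripod (x |-> x, x |-> phiY (g x))
   between X' and the image Y' = phiY (g X') has the same distortion bound, and
   |Y'| <= |X'|. *)
From mathcomp Require Import all_boot.
From Stdlib Require Import Reals Lra Classical ClassicalEpsilon.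
From Coquelicot Require Import Coquelicot.
Set Implicit Arguments.
Unset Strict Implicit.
Local Open Scope R_scope.

Lemma Rbar_glb_correct (E : Rbar -> Prop) : Rbar_is_glb E (Rbar_glb E).
Proof. exact: proj2_sig (Rbar_ex_glb E). Qed.

Lemma Rbar_glb_le (E : Rbar -> Prop) (e : Rbar) : E e -> Rbar_le (Rbar_glb E) e.
Proof. exact: (proj1 (Rbar_glb_correct E)). Qed.

Lemma Rbar_glb_lt (E : Rbar -> Prop) (c : Rbar) :
  Rbar_lt (Rbar_glb E) c -> exists2 e, E e & Rbar_lt e c.
Proof.
move=> glb_lt_c; apply: NNPP => no_e.
have c_lb : Rbar_is_lower_bound E c.
  move=> e Ee; apply: Rbar_not_lt_le => e_lt_c; apply: no_e; by exists e.
exact: Rbar_lt_not_le glb_lt_c (proj2 (Rbar_glb_correct E) c c_lb).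
Qed.

Lemma surjective_section (A B : Type) (f : A -> B) :
  surjective f -> exists g : B -> A, cancel g f.
Proof. exact: ClassicalEpsilon.choice. Qed.

Section Tripods.

Variables (X Y : Type) (dX : R -> X -> X -> R) (dY : R -> Y -> Y -> R).

Lemma distortion_ge0 (Z : Type) (phiX : Z -> X) (phiY : Z -> Y) :
  Rbar_le 0 (distortion dX dY phiX phiY).
Proof.
apply: (proj2 (Rbar_glb_correct _)) => _ [eps [-> [eps_gt0 _]]] /=; lra.
Qed.

Lemma distortion_le (Z : Type) (phiX : Z -> X) (phiY : Z -> Y) (eps : R) :
  0 < eps -> is_2eps_tripod dX dY phiX phiY eps ->
  Rbar_le (distortion dX dY phiX phiY) eps.
Proof. by move=> eps_gt0 tri; apply: Rbar_glb_le; exists eps. Qed.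

Lemma d_dyn_ge0 : Rbar_le 0 (d_dyn dX dY).
Proof.
apply: (proj2 (Rbar_glb_correct _)) => _ [Z [phiX [phiY [_ [_ ->]]]]].
exact: distortion_ge0.
Qed.

Lemma d_dyn_le_distortion (Z : Type) (phiX : Z -> X) (phiY : Z -> Y) :
  surjective phiX -> surjective phiY ->
  Rbar_le (d_dyn dX dY) (distortion dX dY phiX phiY).
Proof. by move=> sX sY; apply: Rbar_glb_le; exists Z, phiX, phiY. Qed.

Lemma d_dyn_lt_tripod (c : Rbar) :
  Rbar_lt (d_dyn dX dY) c ->
  exists Z (phiX : Z -> X) (phiY : Z -> Y) (eps : R),
    [/\ surjective phiX, surjective phiY, 0 < eps,
        is_2eps_tripod dX dY phiX phiY eps & Rbar_lt eps c].
Proof.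
case/Rbar_glb_lt=> _ [Z [phiX [phiY [sX [sY ->]]]]].
case/Rbar_glb_lt=> _ [eps [-> [eps_gt0 tri]]] eps_lt_c.
by exists Z, phiX, phiY, eps.
Qed.

End Tripods.

Lemma d_dyn_restr_le (X Y : finType) (dX : R -> X -> X -> R)
    (dY : R -> Y -> Y -> R) (Z : Type) (phiX : Z -> X) (phiY : Z -> Y)
    (eps : R) (X' : {set X}) :
  surjective phiX -> 0 < eps -> is_2eps_tripod dX dY phiX phiY eps ->
  exists Y' : {set Y}, (#|Y'| <= #|X'|)%nat /\
    Rbar_le (d_dyn (restr_dist dX X') (restr_dist dY Y')) eps.
Proof.
move=> /surjective_section [g gK] eps_gt0 tri.
pose Y' := [set phiY (g x) | x in X'].
exists Y'; split; first exact: leq_imset_card.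
pose psiY (x : {x | x \in X'}) : {y | y \in Y'} :=
  exist _ (phiY (g (sval x))) (imset_f _ (svalP x)).
have psiY_surj : surjective psiY.
  move=> [y y_in]; have /imsetP [x x_in y_def] := y_in.
  by exists (exist _ x x_in); apply: val_inj.
have tri' : is_2eps_tripod (restr_dist dX X') (restr_dist dY Y')
                          (@id {x | x \in X'}) psiY eps.
  by move=> t x x'; have := tri t (g (sval x)) (g (sval x')); rewrite !gK.
have id_surj : surjective (@id {x | x \in X'}) by move=> x; exists x.
exact: Rbar_le_trans _ _ _ (d_dyn_le_distortion _ _ id_surj psiY_surj)
                           (distortion_le eps_gt0 tri').
Qed.

Theorem mainTheorem12 (X Y : finType) (dX : R -> X -> X -> R) (dY : R -> Y -> Y -> R)
  (hX : is_DMS dX) (hY : is_DMS dY) (delta : R) (hdelta : 0 < delta) :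
  forall X' : {set X}, exists Y' : {set Y},
    (#|Y'| <= #|X'|)%nat /\
    Rbar_le (d_dyn (restr_dist dX X') (restr_dist dY Y'))
            (Rbar_plus (d_dyn dX dY) (Finite delta)).
Proof.
move=> X'.
case d_dyn_eq: (d_dyn dX dY) => [D||]; last by have := d_dyn_ge0 dX dY; rewrite d_dyn_eq.
- have d_dyn_lt : Rbar_lt (d_dyn dX dY) (D + delta) by rewrite d_dyn_eq /=; lra.
  have [Z [phiX [phiY [eps [sX _ eps_gt0 tri eps_lt]]]]] :=
    d_dyn_lt_tripod d_dyn_lt.
  have [Y' [card_Y' d_dyn_le_eps]] := d_dyn_restr_le X' sX eps_gt0 tri.
  exists Y'; split => //.
  apply: Rbar_le_trans _ _ _ d_dyn_le_eps _; rewrite /= in eps_lt *; lra.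
- exists set0; split; first by rewrite cards0.
  by case: (d_dyn _ _).
Qed.
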